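(* Let $(E,\|\cdot\|)$ be a normed space over $K$ and let $A$ be a local compactoid in $E$. If the linear span $[A]$, with the norm restricted from $E$, is a Banach space, then $A$ is the sum of a compactoid and a space of finite type, i.e. $A=B+D$ for some compactoid $B\subseteq E$ and some linear subspace $D\subseteq E$ which, with the induced topology, is of finite type.
   Context: $K$ is a field complete with respect to a non-trivial non-archimedean absolute value, $B_K=\{x\in K:|x|\le1\}$; norms and seminorms are non-archimedean. Absolutely convex = $B_K$-submodule; $[X]$ is the linear span and $\mathrm{aco}\,X$ the absolutely convex hull. A compactoid is an absolutely convex $B$ such that for every zero neighbourhood $U$ there is a finite $S$ with $B\subseteq U+\mathrm{aco}\,S$. A local compactoid in $E$ is an absolutely convex $A$ such that for every zero neighbourhood $U$ there is a finite $S\subseteq E$ with $A\subseteq U+[S]$. A locally convex space $D$ is of finite type if for every continuous seminorm $p$ on $D$, the normed space $D/\{p=0\}$ is finite-dimensional. *)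

From HB Require Import structures.
From mathcomp Require Import all_boot all_order all_algebra.
From mathcomp Require Import boolp classical_sets reals.
Set Implicit Arguments. Unset Strict Implicit. Unset Printing Implicit Defensive.
Import Order.TTheory GRing.Theory Num.Theory.
Local Open Scope ring_scope.
Local Open Scope classical_set_scope.

Section Defs.
Variables (R : realType) (K : fieldType).

Definition nonarch_abs (abs : K -> R) : Prop :=
  [/\ forall x, 0 <= abs x,
      forall x, abs x = 0 <-> x = 0,
      forall x y, abs (x * y) = abs x * abs y &
      forall x y, abs (x + y) <= Num.max (abs x) (abs y)].

Definition nontrivial_abs (abs : K -> R) : Prop :=
  exists x, abs x != 0 /\ abs x != 1.

Definition complete_abs (abs : K -> R) : Prop :=
  forall u : nat -> K,
    (forall eps : R, 0 < eps -> exists N, forall m n, (N <= m)%N -> (N <= n)%N ->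
        abs (u m - u n) < eps) ->
    exists l, forall eps : R, 0 < eps -> exists N, forall n, (N <= n)%N ->
        abs (u n - l) < eps.

Variables (abs : K -> R) (E : lmodType K).

Definition nonarch_norm (nrm : E -> R) : Prop :=
  [/\ forall x, 0 <= nrm x,
      forall x, nrm x = 0 <-> x = 0,
      forall (a : K) x, nrm (a *: x) = abs a * nrm x &
      forall x y, nrm (x + y) <= Num.max (nrm x) (nrm y)].

Definition abs_convex (A : set E) : Prop :=
  [/\ A 0,
      forall x y, A x -> A y -> A (x + y) &
      forall (a : K) x, abs a <= 1 -> A x -> A (a *: x)].

Definition linear_subspace (D : set E) : Prop :=
  [/\ D 0,
      forall x y, D x -> D y -> D (x + y) &
      forall (a : K) x, D x -> D (a *: x)].

Definition lspan (X : set E) : set E :=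
  [set x | exists n (s : 'I_n -> E) (c : 'I_n -> K),
     (forall i, X (s i)) /\ x = \sum_(i < n) c i *: s i].

Definition aco (X : set E) : set E :=
  [set x | exists n (s : 'I_n -> E) (c : 'I_n -> K),
     [/\ forall i, X (s i), forall i, abs (c i) <= 1 &
         x = \sum_(i < n) c i *: s i]].

Definition msum (X Y : set E) : set E :=
  [set z | exists x y, [/\ X x, Y y & z = x + y]].

Variable nrm : E -> R.

Definition zero_nbhd (U : set E) : Prop :=
  exists eps : R, 0 < eps /\ [set x | nrm x < eps] `<=` U.

Definition compactoid (B : set E) : Prop :=
  abs_convex B /\
  forall U, zero_nbhd U ->
    exists n (s : 'I_n -> E), B `<=` msum U (aco (range s)).

Definition local_compactoid (A : set E) : Prop :=
  abs_convex A /\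
  forall U, zero_nbhd U ->
    exists n (s : 'I_n -> E), A `<=` msum U (lspan (range s)).

Definition banach_subset (F : set E) : Prop :=
  forall u : nat -> E, (forall n, F (u n)) ->
    (forall eps : R, 0 < eps -> exists N, forall m n, (N <= m)%N -> (N <= n)%N ->
        nrm (u m - u n) < eps) ->
    exists l, F l /\ forall eps : R, 0 < eps -> exists N, forall n, (N <= n)%N ->
        nrm (u n - l) < eps.

Definition cont_seminorm_on (D : set E) (p : E -> R) : Prop :=
  [/\ forall x, D x -> 0 <= p x,
      forall (a : K) x, D x -> p (a *: x) = abs a * p x,
      forall x y, D x -> D y -> p (x + y) <= Num.max (p x) (p y) &
      forall x, D x -> forall eps : R, 0 < eps -> exists delta : R, 0 < delta /\
        forall y, D y -> nrm (y - x) < delta -> `|p y - p x| < eps].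

(* D/{p = 0} is finite-dimensional: spanned by the images of finitely many
   vectors of D *)
Definition fin_dim_quotient (D : set E) (p : E -> R) : Prop :=
  exists n (s : 'I_n -> E), (forall i, D (s i)) /\
    forall x, D x -> exists y, lspan (range s) y /\ p (x - y) = 0.

Definition finite_type (D : set E) : Prop :=
  forall p : E -> R, cont_seminorm_on D p -> fin_dim_quotient D p.

End Defs.

From HB Require Import structures.
From mathcomp Require Import all_boot all_order all_algebra.
From mathcomp Require Import boolp classical_sets reals.
From mathcomp Require Import lra.
Set Implicit Arguments. Unset Strict Implicit. Unset Printing Implicit Defensive.
Import Order.TTheory GRing.Theory Num.Theory.
Local Open Scope ring_scope.
Local Open Scope classical_set_scope.

(* Since A is absolutely convex, lspan A is the union of the sets pi^-m A (0 < |pi| < 1), so a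
   Baire argument in the Banach space lspan A shows that the closure of A contains a ball of
   lspan A around 0.  By the local compactoid property this ball lies within any delta of a
   fixed finite span, and a Riesz-lemma argument (more almost orthogonal vectors of comparable
   norm than the dimension of that span would be linearly dependent up to small errors) shows
   that lspan A is finite-dimensional.
   In a finite-dimensional space over a complete field, every absolutely convex set M is closed
   and equals B + D, with B a compactoid and D a subspace contained in M.  This goes by induction
   on the dimension, adjoining one vector e at a time: if the e-coordinate is bounded on M, then
   M lies in a scaled segment plus a scaled compactoid plus the old subspace; if it is unbounded,
   normalising elements of M with large coordinate yields a Cauchy sequence whose limit spans a
   line contained in M. *)

Lemma subrACA (V : zmodType) (a b c d : V) : (a - b) - (c - d) = (a - c) - (b - d).
Proof. by rewrite !opprD !opprK addrACA. Qed.

Lemma bernoulli_ineq (R : realFieldType) (h : R) n :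
  0 <= h -> 1 + n%:R * h <= (1 + h) ^+ n.
Proof.
move=> h0; elim: n => [|n ih]; first by rewrite expr0 mul0r addr0.
have hXn : 0 <= (1 + h) ^+ n by apply: exprn_ge0; lra.
have hn : (0 : R) <= n%:R by [].
rewrite exprS -natr1; nra.
Qed.

Lemma geometric_lt (R : realType) (q : R) : 0 <= q -> q < 1 ->
  forall C eps, 0 < eps -> exists N, C * q ^+ N < eps.
Proof.
move=> q0 q1 C eps eps_gt0; have [C_le0|C_gt0] := lerP C 0.
  by exists 0%N; rewrite expr0 mulr1; lra.
have [->|q_neq0] := eqVneq q 0; first by exists 1%N; rewrite expr1 mulr0.
have q_gt0 : 0 < q by rewrite lt_def q_neq0.
pose h := q^-1 - 1; have h_gt0 : 0 < h by rewrite subr_gt0 invf_gt1.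
have epsh_gt0 : 0 < eps * h := mulr_gt0 eps_gt0 h_gt0.
have := archi_boundP (divr_ge0 (ltW C_gt0) (ltW epsh_gt0)).
set N := Num.Def.archi_bound _; rewrite ltr_pdivrMr // => hN.
exists N; rewrite -[q]invrK exprVn ltr_pdivrMr ?exprn_gt0 ?invr_gt0 //.
have := bernoulli_ineq N (ltW h_gt0); rewrite [1 + h]addrC subrK.
move=> /(ler_wpM2l (ltW eps_gt0)); apply: lt_le_trans; lra.
Qed.

Lemma kernel_nontrivial (K : fieldType) (E : lmodType K) n (s v : nat -> E) :
  (forall i, (i < n.+1)%N -> exists c : nat -> K, v i = \sum_(l < n) c l *: s l) ->
  exists2 c : nat -> K, exists2 j, (j < n.+1)%N & c j != 0 &
    \sum_(i < n.+1) c i *: v i = 0.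
Proof.
move=> hv.
have /choice[C hC] : forall i, exists c : nat -> K,
    (i < n.+1)%N -> v i = \sum_(l < n) c l *: s l.
  by move=> i; case: (ltnP i n.+1) => [/hv [c ->]|hi]; [exists c | exists (fun=> 0)];
    rewrite // ltnNge hi.
pose Mx : 'M[K]_(n.+1, n) := \matrix_(i, l) C i l.
have /rowV0Pn[x /sub_kermxP xMx0 x_neq0] : kermx Mx != 0.
  rewrite kermx_eq0; apply: contraTN isT => /eqP rkMx.
  by have := rank_leq_col Mx; rewrite rkMx ltnn.
have /existsP[j0 x_j0] : [exists j, x 0 j != 0].
  apply: contraNT x_neq0 => /existsPn x0; apply/eqP/rowP => j.
  by rewrite mxE; apply/eqP/negPn/x0.
exists (fun i => x 0 (inord i)); first by exists j0; rewrite // inord_val.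
have -> : \sum_(i < n.+1) x 0 (inord i) *: v i =
    \sum_(l < n) (\sum_(i < n.+1) x 0 i * Mx i l) *: s l.
  under eq_bigr => i _ do rewrite inord_val (hC i (ltn_ord i)) scaler_sumr.
  rewrite exchange_big; apply: eq_bigr => l _; rewrite scaler_suml.
  by apply: eq_bigr => i _; rewrite scalerA mxE.
apply: big1 => l _.
have := congr1 (fun y : 'rV_n => y 0 l) xMx0; rewrite /= !mxE => ->.
by rewrite scale0r.
Qed.

Lemma dependent_choice_nat (T : Type) (P : nat -> T -> Prop) (Q : nat -> T -> T -> Prop) t0 :
  P 0%N t0 -> (forall k t, P k t -> exists t', P k.+1 t' /\ Q k t t') ->
  exists u : nat -> T, forall k, P k (u k) /\ Q k (u k) (u k.+1).
Proof.
move=> P0 step.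
have /choice[f hf] (kt : nat * T) : exists t', P kt.1 kt.2 -> P kt.1.+1 t' /\ Q kt.1 kt.2 t'.
  have [/step [t' ?]|nP] := pselect (P kt.1 kt.2); first by exists t'.
  by exists kt.2.
pose fix u k := if k is k'.+1 then f (k', u k') else t0.
have Pu k : P k (u k) by elim: k => [|k IH] //=; have [] := hf (k, u k) IH.
by exists u => k; split=> //; have [] := hf (k, u k) (Pu k).
Qed.

Section NonArchimedean.
Variables (R : realType) (K : fieldType) (abs : K -> R) (E : lmodType K) (nrm : E -> R).
Hypothesis habs : nonarch_abs abs.
Hypothesis hnorm : nonarch_norm abs nrm.

Lemma abs_ge0 x : 0 <= abs x. Proof. by case: habs. Qed.
Lemma abs_eq0 x : abs x = 0 <-> x = 0. Proof. by case: habs. Qed.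
Lemma absM x y : abs (x * y) = abs x * abs y. Proof. by case: habs. Qed.
Lemma absD_max x y : abs (x + y) <= Num.max (abs x) (abs y). Proof. by case: habs. Qed.

Lemma abs0 : abs 0 = 0. Proof. exact/abs_eq0. Qed.

Lemma abs_gt0 x : x != 0 -> 0 < abs x.
Proof. by move=> x0; rewrite lt_def abs_ge0 andbT; apply: contra x0 => /eqP/abs_eq0->. Qed.

Lemma abs1 : abs 1 = 1.
Proof.
have := absM 1 1; rewrite mulr1 => h11.
by apply: (mulfI (lt0r_neq0 (abs_gt0 (oner_neq0 K)))); rewrite -h11 mulr1.
Qed.

Lemma absN1 : abs (-1) = 1.
Proof.
have := absM (-1) (-1); rewrite mulrNN mulr1 abs1 => /esym/eqP.
rewrite -expr2 sqrf_eq1 => /orP[/eqP //|/eqP h]; have := abs_ge0 (-1); lra.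
Qed.

Lemma absN x : abs (- x) = abs x. Proof. by rewrite -mulN1r absM absN1 mul1r. Qed.

Lemma absV x : abs x^-1 = (abs x)^-1.
Proof.
have [->|x0] := eqVneq x 0; first by rewrite invr0 abs0 invr0.
apply: (mulfI (lt0r_neq0 (abs_gt0 x0))).
by rewrite -absM !mulfV ?abs1 ?lt0r_neq0 ?abs_gt0.
Qed.

Lemma absX x n : abs (x ^+ n) = abs x ^+ n.
Proof. by elim: n => [|n ih]; rewrite ?expr0 ?abs1 // !exprS absM ih. Qed.

Lemma absD_le x y M : abs x <= M -> abs y <= M -> abs (x + y) <= M.
Proof. by move=> hx hy; apply: le_trans (absD_max x y) _; rewrite ge_max hx hy. Qed.

Lemma absD_lt x y M : abs x < M -> abs y < M -> abs (x + y) < M.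
Proof. by move=> hx hy; apply: le_lt_trans (absD_max x y) _; rewrite gt_max hx hy. Qed.

Lemma abs_eq_of_ltB x y : abs (x - y) < abs y -> abs x = abs y.
Proof.
move=> hxy; apply/eqP; rewrite eq_le; apply/andP; split.
  by rewrite -(subrK y x) absD_le // ltW.
rewrite leNgt; apply/negP => hx.
have : abs (x + - (x - y)) < abs y by apply: absD_lt; rewrite ?absN.
by rewrite opprB addrC subrK ltxx.
Qed.

Lemma abs_small_eq0 x : (forall eps, 0 < eps -> abs x < eps) -> x = 0.
Proof.
move=> small; apply/abs_eq0/eqP; rewrite eq_le abs_ge0 andbT leNgt.
by apply/negP => /small; rewrite ltxx.
Qed.

Lemma nrm_ge0 x : 0 <= nrm x. Proof. by case: hnorm. Qed.
Lemma nrm_eq0 x : nrm x = 0 <-> x = 0. Proof. by case: hnorm. Qed.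
Lemma nrmZ a x : nrm (a *: x) = abs a * nrm x. Proof. by case: hnorm. Qed.
Lemma nrmD_max x y : nrm (x + y) <= Num.max (nrm x) (nrm y). Proof. by case: hnorm. Qed.

Lemma nrm0 : nrm 0 = 0. Proof. exact/nrm_eq0. Qed.

Lemma nrm_gt0 x : x != 0 -> 0 < nrm x.
Proof. by move=> x0; rewrite lt_def nrm_ge0 andbT; apply: contra x0 => /eqP/nrm_eq0->. Qed.

Lemma nrmN x : nrm (- x) = nrm x. Proof. by rewrite -scaleN1r nrmZ absN1 mul1r. Qed.

Lemma nrmB x y : nrm (x - y) = nrm (y - x). Proof. by rewrite -nrmN opprB. Qed.

Lemma nrmD_le x y M : nrm x <= M -> nrm y <= M -> nrm (x + y) <= M.
Proof. by move=> hx hy; apply: le_trans (nrmD_max x y) _; rewrite ge_max hx hy. Qed.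

Lemma nrmD_lt x y M : nrm x < M -> nrm y < M -> nrm (x + y) < M.
Proof. by move=> hx hy; apply: le_lt_trans (nrmD_max x y) _; rewrite gt_max hx hy. Qed.

Lemma nrmB_lt x y M : nrm x < M -> nrm y < M -> nrm (x - y) < M.
Proof. by move=> hx hy; apply: nrmD_lt; rewrite ?nrmN. Qed.

Lemma nrmD_ge_of_lt x y : nrm x < nrm y -> nrm y <= nrm (x + y).
Proof.
move=> hxy; rewrite leNgt; apply/negP => hlt.
by have := nrmB_lt hlt hxy; rewrite addrAC subrr add0r ltxx.
Qed.

Lemma nrm_sum_le (I : Type) (r : seq I) (P : pred I) (F : I -> E) M :
  0 <= M -> (forall i, P i -> nrm (F i) <= M) -> nrm (\sum_(i <- r | P i) F i) <= M.
Proof.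
move=> M0 hF; apply: (big_ind (fun x => nrm x <= M)) => //; first by rewrite nrm0.
by move=> x y; apply: nrmD_le.
Qed.

Lemma nrm_sum_lt (I : Type) (r : seq I) (P : pred I) (F : I -> E) M :
  0 < M -> (forall i, P i -> nrm (F i) < M) -> nrm (\sum_(i <- r | P i) F i) < M.
Proof.
move=> M0 hF; apply: (big_ind (fun x => nrm x < M)) => //; first by rewrite nrm0.
by move=> x y; apply: nrmD_lt.
Qed.

Lemma nrmZ_lt a v eps : 0 < eps -> abs a < eps / (nrm v + 1) -> nrm (a *: v) < eps.
Proof.
move=> eps_gt0; have v1 : 0 < nrm v + 1 by have := nrm_ge0 v; lra.
rewrite nrmZ ltr_pdivlMr // => ha; apply: le_lt_trans ha.
by rewrite ler_wpM2l ?abs_ge0 // lerDl.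
Qed.

Lemma nrm_small_eq0 x : (forall eps, 0 < eps -> nrm x < eps) -> x = 0.
Proof.
move=> small; apply/nrm_eq0/eqP; rewrite eq_le nrm_ge0 andbT leNgt.
by apply/negP => /small; rewrite ltxx.
Qed.

Local Notation aconv := (abs_convex abs).

(** * Absolutely convex sets, finite spans and compactoids *)

Section AbsConvex.
Variable M : set E.
Hypothesis hM : aconv M.

Lemma aconv0 : M 0. Proof. by case: hM. Qed.
Lemma aconvD x y : M x -> M y -> M (x + y). Proof. by case: hM => _ h _; apply: h. Qed.
Lemma aconvZ a x : abs a <= 1 -> M x -> M (a *: x). Proof. by case: hM => _ _ h; apply: h. Qed.
Lemma aconvN x : M x -> M (- x). Proof. by rewrite -scaleN1r; apply: aconvZ; rewrite absN1. Qed.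
Lemma aconvB x y : M x -> M y -> M (x - y). Proof. by move=> hx /aconvN; apply: aconvD. Qed.

Lemma aconv_sum (I : Type) (r : seq I) (P : pred I) (F : I -> E) :
  (forall i, P i -> M (F i)) -> M (\sum_(i <- r | P i) F i).
Proof. by move=> hF; apply: big_ind => //; [exact: aconv0 | exact: aconvD]. Qed.

End AbsConvex.

Section Subspace.
Variable W : set E.
Hypothesis hW : linear_subspace W.

Lemma subspace0 : W 0. Proof. by case: hW. Qed.
Lemma subspaceD x y : W x -> W y -> W (x + y). Proof. by case: hW => _ h _; apply: h. Qed.
Lemma subspaceZ a x : W x -> W (a *: x). Proof. by case: hW => _ _ h; apply: h. Qed.
Lemma subspaceB x y : W x -> W y -> W (x - y).
Proof. by move=> hx hy; rewrite -scaleN1r; apply/subspaceD/subspaceZ. Qed.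

Lemma subspace_sum (I : Type) (r : seq I) (P : pred I) (F : I -> E) :
  (forall i, P i -> W (F i)) -> W (\sum_(i <- r | P i) F i).
Proof. by move=> hF; apply: big_ind => //; [exact: subspace0 | exact: subspaceD]. Qed.

Lemma subspace_aconv : aconv W.
Proof. by split=> [|x y|a x _]; [exact: subspace0 | exact: subspaceD | exact: subspaceZ]. Qed.

Lemma lspan_sub X : X `<=` W -> lspan X `<=` W.
Proof.
by move=> XW _ [n [s [c [Xs ->]]]]; apply: subspace_sum => i _; apply/subspaceZ/XW.
Qed.

End Subspace.

Lemma aconvI (M1 M2 : set E) : aconv M1 -> aconv M2 -> aconv (M1 `&` M2).
Proof.
move=> h1 h2; split.
- by split; [exact: (aconv0 h1) | exact: (aconv0 h2)].
- by move=> x y [? ?] [? ?]; split; [exact: (aconvD h1) | exact: (aconvD h2)].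
- by move=> a x ha [? ?]; split; [exact: (aconvZ h1) | exact: (aconvZ h2)].
Qed.

Lemma aconv_msum (M1 M2 : set E) : aconv M1 -> aconv M2 -> aconv (msum M1 M2).
Proof.
move=> h1 h2; split.
- by exists 0, 0; rewrite addr0; split=> //; [exact: (aconv0 h1) | exact: (aconv0 h2)].
- move=> _ _ [x1 [x2 [hx1 hx2 ->]]] [y1 [y2 [hy1 hy2 ->]]].
  exists (x1 + y1), (x2 + y2); rewrite addrACA.
  by split=> //; [exact: (aconvD h1) | exact: (aconvD h2)].
- move=> a _ ha [x1 [x2 [hx1 hx2 ->]]]; exists (a *: x1), (a *: x2).
  by rewrite scalerDr; split=> //; [exact: (aconvZ h1) | exact: (aconvZ h2)].
Qed.

Lemma aconv_image_scale (M : set E) a : aconv M -> aconv [set a *: x | x in M].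
Proof.
move=> hM; split.
- by exists 0; rewrite ?scaler0 //; exact: (aconv0 hM).
- by move=> _ _ [x hx <-] [y hy <-]; exists (x + y); rewrite ?scalerDr //; exact: (aconvD hM).
- move=> b _ hb [x hx <-]; exists (b *: x); first exact: (aconvZ hM).
  by rewrite !scalerA mulrC.
Qed.

Definition fspan n (s : nat -> E) : set E :=
  [set x | exists c : nat -> K, x = \sum_(i < n) c i *: s i].

Definition faco n (s : nat -> E) : set E :=
  [set x | exists2 c : nat -> K, forall i, abs (c i) <= 1 & x = \sum_(i < n) c i *: s i].

Lemma fspan_subspace n s : linear_subspace (fspan n s).
Proof.
split.
- by exists (fun=> 0); rewrite big1 // => i _; rewrite scale0r.
- move=> _ _ [c ->] [d ->]; exists (fun i => c i + d i).
  by rewrite -big_split; apply: eq_bigr => i _; rewrite scalerDl.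
- move=> a _ [c ->]; exists (fun i => a * c i).
  by rewrite scaler_sumr; apply: eq_bigr => i _; rewrite scalerA.
Qed.

Lemma fspan_mem n s i : (i < n)%N -> fspan n s (s i).
Proof.
move=> lt_in; exists (fun j => (j == i)%:R).
rewrite (bigD1 (Ordinal lt_in)) //= eqxx scale1r big1 ?addr0 // => j ji.
by rewrite (negbTE (_ : (j : nat) != i)) ?scale0r //.
Qed.

Lemma fspanSP n s x : fspan n.+1 s x <-> exists w c, fspan n s w /\ x = w + c *: s n.
Proof.
split=> [[c ->]|[_ [a [[c ->] ->]]]].
  by exists (\sum_(i < n) c i *: s i), (c n); split; [exists c | rewrite big_ord_recr].
exists (fun i => if i == n then a else c i).
rewrite big_ord_recr /= eqxx; congr (_ + _); apply: eq_bigr => i _.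
by rewrite ltn_eqF.
Qed.

Lemma fspan_eq n s t : (forall i, (i < n)%N -> s i = t i) -> fspan n s = fspan n t.
Proof.
by move=> st; rewrite predeqE => x; split=> -[c ->]; exists c; apply: eq_bigr => i _;
  rewrite st ?ltn_ord.
Qed.

Lemma fspan_sub (W : set E) n s :
  linear_subspace W -> (forall i, (i < n)%N -> W (s i)) -> fspan n s `<=` W.
Proof. by move=> hW hs _ [c ->]; apply: (subspace_sum hW) => i _; apply/(subspaceZ hW)/hs. Qed.

Definition ord_seq n (f : 'I_n -> E) (k : nat) : E := oapp f 0 (insub k).

Lemma lspan_range_fspan n (f : 'I_n -> E) : lspan (range f) `<=` fspan n (ord_seq f).
Proof.
apply: lspan_sub; first exact: fspan_subspace.
move=> _ [i _ <-]; have -> : f i = ord_seq f i by rewrite /ord_seq valK.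
exact: fspan_mem.
Qed.

Lemma fspan_lspan n t : fspan n t `<=` lspan (range (fun i : 'I_n => t i)).
Proof. by move=> _ [c ->]; exists n, (fun i : 'I_n => t i), (fun i : 'I_n => c i). Qed.

Definition tends_to (u : nat -> E) l :=
  forall eps : R, 0 < eps -> exists N, forall n, (N <= n)%N -> nrm (u n - l) < eps.

Definition cauchy_seq (u : nat -> E) :=
  forall eps : R, 0 < eps -> exists N, forall m n, (N <= m)%N -> (N <= n)%N ->
    nrm (u m - u n) < eps.

Definition seq_closed (M : set E) :=
  forall u x, (forall k, M (u k)) -> tends_to u x -> M x.

Lemma tends_cauchy u l : tends_to u l -> cauchy_seq u.
Proof.
move=> ul eps eps_gt0; have [N hN] := ul eps eps_gt0; exists N => m n hm hn.
by rewrite -(subrKA l); apply: nrmD_lt; [apply: hN | rewrite nrmB; apply: hN].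
Qed.

Lemma tendsZ a u l : tends_to u l -> tends_to (fun n => a *: u n) (a *: l).
Proof.
move=> ul eps eps_gt0; have [->|a0] := eqVneq a 0.
  by exists 0%N => n _; rewrite !scale0r subrr nrm0.
have [N hN] := ul _ (divr_gt0 eps_gt0 (abs_gt0 a0)); exists N => n /hN.
by rewrite -scalerBr nrmZ [abs a * _]mulrC -ltr_pdivlMr ?abs_gt0.
Qed.

Lemma tends_shift N u l : tends_to u l -> tends_to (fun n => u (n + N)%N) l.
Proof.
move=> ul eps /ul [N' hN']; exists N' => n leN'n.
by apply: hN'; rewrite (leq_trans leN'n) ?leq_addr.
Qed.

Lemma tends_uniq u l1 l2 : tends_to u l1 -> tends_to u l2 -> l1 = l2.
Proof.
move=> h1 h2; apply/eqP; rewrite -subr_eq0; apply/eqP/nrm_small_eq0 => eps eps_gt0.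
have [N1 hN1] := h1 eps eps_gt0; have [N2 hN2] := h2 eps eps_gt0.
pose N := maxn N1 N2; rewrite -(subrKA (u N)).
by apply: nrmD_lt; [rewrite nrmB; apply: hN1 | apply: hN2]; rewrite ?leq_maxl ?leq_maxr.
Qed.

Lemma nrm_tail_le u r : (forall k, r k.+1 <= r k) ->
  (forall k, nrm (u k.+1 - u k) <= r k) -> forall k i, nrm (u (k + i)%N - u k) <= r k.
Proof.
move=> r_dec hu k.
have r_anti i : r (k + i)%N <= r k.
  by elim: i => [|i ih]; rewrite ?addn0 // addnS; apply: le_trans (r_dec _) ih.
elim=> [|i ih]; first by rewrite addn0 subrr nrm0 (le_trans _ (hu k)) ?nrm_ge0.
rewrite addnS -(subrKA (u (k + i)%N)); apply: nrmD_le => //.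
exact: le_trans (hu _) (r_anti i).
Qed.

Lemma cauchy_of_geometric u (C q : R) : 0 <= C -> 0 <= q -> q < 1 ->
  (forall k, nrm (u k.+1 - u k) <= C * q ^+ k) -> cauchy_seq u.
Proof.
move=> C0 q0 q1 hu eps /(geometric_lt q0 q1 C) [N hN]; exists N => m n hm hn.
have r_dec k : C * q ^+ k.+1 <= C * q ^+ k.
  by apply: ler_wpM2l => //; rewrite exprS ler_piMl ?exprn_ge0 // ltW.
rewrite -(subnKC hm) -(subnKC hn) -(subrKA (u N)).
by apply: nrmD_lt; [|rewrite nrmB]; apply: le_lt_trans (nrm_tail_le r_dec hu _ _) hN.
Qed.

Lemma banach_seq_closed (V : set E) : banach_subset nrm V -> seq_closed V.
Proof.
move=> hV u x Vu ux; have [l [Vl ul]] := hV u Vu (tends_cauchy ux).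
by rewrite (tends_uniq ux ul).
Qed.

Lemma banach_approx_mem (W : set E) x : banach_subset nrm W ->
  (forall eps, 0 < eps -> exists2 w, W w & nrm (x - w) < eps) -> W x.
Proof.
move=> hW approx.
have q0 : (0 : R) <= 2^-1 by rewrite invr_ge0.
have q1 : (2^-1 : R) < 1 by rewrite invf_lt1 ?ltr1n.
have /choice[w hw] k : exists w, W w /\ nrm (x - w) < 2^-1 ^+ k.
  by have [|w] := approx (2^-1 ^+ k); rewrite ?exprn_gt0 ?invr_gt0 //; exists w.
have wx : tends_to w x.
  move=> eps eps_gt0; have [N hN] := geometric_lt q0 q1 1 eps_gt0.
  exists N => n leNn; rewrite nrmB; apply: lt_le_trans (hw n).2 _.
  by apply: le_trans (ltW hN); rewrite mul1r ler_wiXn2l // ltW.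
exact: banach_seq_closed hW w x (fun k => (hw k).1) wx.
Qed.

Definition ball_compactoid (B : set E) :=
  forall eps, 0 < eps -> exists n s, B `<=` msum [set u | nrm u < eps] (faco n s).

Definition aco1 v : set E := [set a *: v | a in [set a | abs a <= 1]].

Lemma faco_bound n s v : faco n s v -> nrm v <= \sum_(i < n) nrm (s i).
Proof.
have sum_ge0 : 0 <= \sum_(i < n) nrm (s i) by apply: sumr_ge0 => i _; exact: nrm_ge0.
move=> [c c1 ->]; apply: nrm_sum_le => // i _; rewrite nrmZ.
apply: le_trans (_ : nrm (s i) <= _); first by rewrite ler_piMl ?nrm_ge0.
by rewrite (bigD1 i) //= lerDl sumr_ge0 // => j _; exact: nrm_ge0.
Qed.

Lemma ball_compactoid_bounded B :
  ball_compactoid B -> exists2 rho, 0 < rho & forall b, B b -> nrm b < rho.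
Proof.
move=> /(_ 1 ltr01) [n [s Bs]].
have sum_ge0 : 0 <= \sum_(i < n) nrm (s i) by apply: sumr_ge0 => i _; exact: nrm_ge0.
exists (1 + \sum_(i < n) nrm (s i)); first lra.
move=> _ /Bs [u [v [/= u1 /faco_bound hv ->]]].
by apply: nrmD_lt; lra.
Qed.

Lemma ball_compactoid_aco1 v : ball_compactoid (aco1 v).
Proof.
move=> eps eps_gt0; exists 1%N, (fun=> v) => _ [a a1 <-].
exists 0, (a *: v); rewrite add0r; split=> //=; first by rewrite nrm0.
by exists (fun=> a); rewrite ?big_ord1.
Qed.

Lemma ball_compactoid_scale B lam :
  ball_compactoid B -> ball_compactoid [set lam *: b | b in B].
Proof.
move=> hB eps eps_gt0; have [->|lam0] := eqVneq lam 0.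
  exists 0%N, (fun=> 0) => _ [b _ <-]; exists 0, 0; rewrite scale0r addr0.
  by split=> //=; [rewrite nrm0 | exists (fun=> 0); rewrite ?big_ord0 // abs0].
have lam_gt0 := abs_gt0 lam0.
have [n [s Bs]] := hB _ (divr_gt0 eps_gt0 lam_gt0).
exists n, (fun i => lam *: s i) => _ [b /Bs [u [v [/= hu [c c1 ->] ->]]] <-].
exists (lam *: u), (\sum_(i < n) c i *: (lam *: s i)); split=> /=.
- by rewrite nrmZ mulrC -ltr_pdivlMr.
- by exists c.
- by rewrite scalerDr scaler_sumr; congr (_ + _); apply: eq_bigr => i _; rewrite !scalerA mulrC.
Qed.

Lemma ball_compactoid_msum B1 B2 :
  ball_compactoid B1 -> ball_compactoid B2 -> ball_compactoid (msum B1 B2).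
Proof.
move=> h1 h2 eps eps_gt0.
have [n1 [s1 B1s]] := h1 eps eps_gt0; have [n2 [s2 B2s]] := h2 eps eps_gt0.
pose cat (f g : nat -> _) i := if (i < n1)%N then f i else g (i - n1)%N.
exists (n1 + n2)%N, (cat _ s1 s2).
move=> _ [_ [_ [/B1s [u1 [_ [hu1 [c1 c11 ->] ->]]] /B2s [u2 [_ [hu2 [c2 c21 ->] ->]]] ->]]].
exists (u1 + u2), (\sum_(i < n1 + n2) cat _ c1 c2 i *: cat _ s1 s2 i); split=> /=.
- exact: nrmD_lt.
- by exists (cat _ c1 c2) => // i; rewrite /cat; case: ifP.
- rewrite big_split_ord /= addrACA; congr (_ + (_ + _)).
    by apply: eq_bigr => i _; rewrite /cat ltn_ord.
  by apply: eq_bigr => i _; rewrite /cat ltnNge leq_addr /= addKn.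
Qed.

Lemma aconv_aco1 v : aconv (aco1 v).
Proof.
split.
- by exists 0; rewrite ?scale0r //= abs0.
- move=> _ _ [a a1 <-] [b b1 <-]; exists (a + b); rewrite ?scalerDl //.
  exact: absD_le.
- move=> a _ a1 [b b1 <-]; exists (a * b); rewrite ?scalerA //= absM.
  by rewrite -[1]mulr1 ler_pM ?abs_ge0.
Qed.

Lemma image_scale_mem (M : set E) lam a x : aconv M -> lam != 0 ->
  abs a <= abs lam -> M x -> [set lam *: y | y in M] (a *: x).
Proof.
move=> hM lam0 a_le Mx; exists ((lam^-1 * a) *: x); last by rewrite scalerA mulVKf.
by apply: (aconvZ hM _ Mx); rewrite absM absV ler_pdivrMl ?abs_gt0 // mulr1.
Qed.

Lemma ball_compactoid_sub B B' : B `<=` B' -> ball_compactoid B' -> ball_compactoid B.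
Proof. by move=> BB' hB' eps /hB' [n [s B's]]; exists n, s => b /BB' /B's. Qed.

Lemma ball_compactoid_compactoid B :
  aconv B -> ball_compactoid B -> compactoid abs nrm B.
Proof.
move=> hB Bc; split=> // U [eps [eps_gt0 epsU]]; have [n [s Bs]] := Bc eps eps_gt0.
exists n, (fun i : 'I_n => s i) => _ /Bs [u [_ [hu [c c1 ->] ->]]].
exists u, (\sum_(i < n) c i *: s i); split; first exact: epsU.
  by exists n, (fun i : 'I_n => s i), (fun i : 'I_n => c i); split=> // i; exists i.
by [].
Qed.

Hypothesis K_complete : complete_abs abs.
Variable pi : K.
Hypothesis pi_gt0 : 0 < abs pi.
Hypothesis pi_lt1 : abs pi < 1.

Lemma pi_neq0 : pi != 0.
Proof. by apply: contraTneq pi_gt0 => ->; rewrite abs0 ltxx. Qed.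

Definition decomposes (M : set E) := exists B, [/\ aconv B, ball_compactoid B &
  exists k t, fspan k t `<=` M /\ M `<=` msum B (fspan k t)].

(** * Adjoining a vector to a complete subspace *)

Section AddLine.
Variables (W : set E) (e : E) (d : R).
Hypothesis hW : linear_subspace W.
Hypothesis W_complete : banach_subset nrm W.
Hypothesis d_gt0 : 0 < d.
Hypothesis e_far : forall w, W w -> d <= nrm (e - w).

Definition add_line : set E := [set x | exists w c, W w /\ x = w + c *: e].

Lemma add_line_subspace : linear_subspace add_line.
Proof.
split.
- by exists 0, 0; rewrite scale0r addr0; split=> //; exact: subspace0.
- move=> _ _ [w1 [c1 [W1 ->]]] [w2 [c2 [W2 ->]]]; exists (w1 + w2), (c1 + c2).
  by rewrite scalerDl addrACA; split=> //; exact: subspaceD.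
- move=> a _ [w [c [Ww ->]]]; exists (a *: w), (a * c).
  by rewrite scalerDr scalerA; split=> //; exact: subspaceZ.
Qed.

Lemma sub_add_line : W `<=` add_line.
Proof. by move=> w Ww; exists w, 0; rewrite scale0r addr0. Qed.

Lemma nrm_add_line_ge w c : W w -> abs c * d <= nrm (w + c *: e).
Proof.
move=> Ww; have [->|c0] := eqVneq c 0; first by rewrite abs0 mul0r nrm_ge0.
have -> : w + c *: e = c *: (e - (- c^-1) *: w).
  by rewrite scalerBr scalerA mulrN mulfV // scaleN1r opprK addrC.
by rewrite nrmZ ler_wpM2l ?abs_ge0 // e_far //; exact: subspaceZ.
Qed.

(* Unique by [coordE], since [e] is at positive distance from [W]; [0] off [add_line]. *)
Definition coord x := xget 0 [set c | exists2 w, W w & x = w + c *: e].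

Lemma coordE w c : W w -> coord (w + c *: e) = c.
Proof.
move=> Ww; apply: xget_unique; first by exists w.
move=> c' [w' Ww' eq_wc]; apply/eqP; rewrite -subr_eq0; apply/eqP/abs_eq0/eqP.
rewrite eq_le abs_ge0 andbT -(pmulr_lle0 _ d_gt0).
have := nrm_add_line_ge (c' - c) (subspaceB hW Ww' Ww).
by rewrite scalerBl addrACA -eq_wc addrACA !subrr addr0 nrm0.
Qed.

Lemma coordP x : add_line x -> exists2 w, W w & x = w + coord x *: e.
Proof. by move=> [w [c [Ww ->]]]; rewrite coordE //; exists w. Qed.

Lemma coordW w : W w -> coord w = 0.
Proof. by move=> Ww; rewrite -[w]addr0 -(scale0r e) coordE. Qed.

Lemma coord_eq0 x : add_line x -> coord x = 0 -> W x.
Proof. by move=> /coordP [w Ww eqx] cx0; rewrite eqx cx0 scale0r addr0. Qed.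

Lemma coordD x y : add_line x -> add_line y -> coord (x + y) = coord x + coord y.
Proof.
move=> /coordP [w1 W1 {1}->] /coordP [w2 W2 {1}->].
by rewrite addrACA -scalerDl coordE //; exact: subspaceD.
Qed.

Lemma coordZ a x : add_line x -> coord (a *: x) = a * coord x.
Proof.
by move=> /coordP [w Ww {1}->]; rewrite scalerDr scalerA coordE //; exact: subspaceZ.
Qed.

Lemma coordB x y : add_line x -> add_line y -> coord (x - y) = coord x - coord y.
Proof.
move=> Vx Vy; have VNy : add_line (- y).
  by rewrite -scaleN1r; exact: (subspaceZ add_line_subspace _ Vy).
by rewrite coordD // -scaleN1r coordZ // mulN1r.
Qed.

Lemma coord_le x : add_line x -> abs (coord x) * d <= nrm x.
Proof. by move=> /coordP [w Ww {2}->]; exact: nrm_add_line_ge. Qed.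

Lemma coord_tends u x : (forall k, add_line (u k)) -> add_line x -> tends_to u x ->
  forall eps, 0 < eps -> exists N, forall n, (N <= n)%N -> abs (coord (u n) - coord x) < eps.
Proof.
move=> Vu Vx ux eps eps_gt0; have [N hN] := ux _ (mulr_gt0 eps_gt0 d_gt0).
exists N => n /hN unx; rewrite -(ltr_pM2r d_gt0) -coordB //; apply: le_lt_trans unx.
exact/coord_le/(subspaceB add_line_subspace).
Qed.

Lemma add_line_complete : banach_subset nrm add_line.
Proof.
move=> u Vu u_cauchy; pose c k := coord (u k).
have [xi cxi] : exists xi, forall eps, 0 < eps ->
    exists N, forall n, (N <= n)%N -> abs (c n - xi) < eps.
  apply: K_complete => eps eps_gt0.
  have [N hN] := u_cauchy _ (mulr_gt0 eps_gt0 d_gt0); exists N => m n hm hn.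
  rewrite -(ltr_pM2r d_gt0) -coordB //; apply: le_lt_trans (hN m n hm hn).
  exact/coord_le/(subspaceB add_line_subspace).
pose w k := u k - c k *: e.
have Ww k : W (w k) by rewrite /w /c; have [w' Ww' {1}->] := coordP (Vu k); rewrite addrK.
have ne1 : 0 < nrm e + 1 by have := nrm_ge0 e; lra.
have [om [Wom wom]] : exists om, W om /\ tends_to w om.
  apply: W_complete => // eps eps_gt0.
  have [N1 hN1] := u_cauchy eps eps_gt0.
  have [N2 hN2] := cxi _ (divr_gt0 eps_gt0 ne1).
  exists (maxn N1 N2) => m n; rewrite !geq_max => /andP[m1 m2] /andP[n1 n2].
  rewrite /w subrACA -scalerBl; apply: nrmB_lt; first exact: hN1.
  apply: nrmZ_lt => //; rewrite -(subrKA xi).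
  by apply: absD_lt; [exact: hN2 | rewrite -absN opprB; exact: hN2].
exists (om + xi *: e); split; first by exists om, xi.
move=> eps eps_gt0; have [N1 hN1] := wom eps eps_gt0.
have [N2 hN2] := cxi _ (divr_gt0 eps_gt0 ne1).
exists (maxn N1 N2) => n; rewrite geq_max => /andP[n1 n2].
rewrite opprD addrA -[u n](subrK (c n *: e)) -/(w n) [w n + _ - om]addrAC -addrA -scalerBl.
by apply: nrmD_lt; [exact: hN1 | apply: nrmZ_lt => //; exact: hN2].
Qed.

Section Pivot.
Variable M : set E.
Hypothesis hM : aconv M.
Hypothesis M_line : M `<=` add_line.

Lemma pivot_mem x y : M x -> M y -> coord y != 0 -> abs (coord x) <= abs (coord y) ->
  (M `&` W) (x - (coord x / coord y) *: y).
Proof.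
move=> Mx My cy0 le_xy; have Vy := M_line My.
have Vxy : add_line ((coord x / coord y) *: y) by exact: (subspaceZ add_line_subspace _ Vy).
split.
  apply: (aconvB hM Mx (aconvZ hM _ My)).
  by rewrite absM absV ler_pdivrMr ?abs_gt0 // mul1r.
apply: coord_eq0; first exact: (subspaceB add_line_subspace (M_line Mx) Vxy).
by rewrite coordB ?coordZ ?mulfVK ?subrr //; exact: M_line.
Qed.

(* Subtracting multiples of the pivot [y] moves the tail of [u] into [M `&` W]; as [y] has the
   largest coordinate, the multiples stay in [M]. *)
Lemma closed_pivot u x y N : seq_closed (M `&` W) ->
  (forall k, M (u k)) -> tends_to u x -> M y -> coord y != 0 ->
  (forall k, (N <= k)%N -> abs (coord (u k)) <= abs (coord y)) ->
  abs (coord x) <= abs (coord y) -> M x.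
Proof.
move=> MW_closed Mu ux My cy0 u_le x_le.
have Vu k : add_line (u k) := M_line (Mu k).
have Vx : add_line x := banach_seq_closed add_line_complete Vu ux.
pose v k := u (k + N)%N - (coord (u (k + N)%N) / coord y) *: y.
have MWv k : (M `&` W) (v k) by apply: pivot_mem => //; apply: u_le; rewrite leq_addl.
have vx : tends_to v (x - (coord x / coord y) *: y).
  move=> eps eps_gt0; have y1 : 0 < nrm y + 1 by have := nrm_ge0 y; lra.
  have [N1 hN1] := tends_shift N ux eps_gt0.
  have [N2 hN2] := coord_tends Vu Vx ux (mulr_gt0 (divr_gt0 eps_gt0 y1) (abs_gt0 cy0)).
  exists (maxn N1 N2) => n; rewrite geq_max => /andP[n1 n2].
  rewrite /v subrACA -scalerBl -mulrBl; apply: nrmB_lt; first exact: hN1.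
  apply: nrmZ_lt => //; rewrite absM absV ltr_pdivrMr ?abs_gt0 //.
  by apply: hN2; rewrite (leq_trans n2) ?leq_addr.
have [MWx _] := MW_closed v _ MWv vx.
rewrite -(subrK ((coord x / coord y) *: y) x); apply: (aconvD hM MWx (aconvZ hM _ My)).
by rewrite absM absV ler_pdivrMr ?abs_gt0 // mul1r.
Qed.

Lemma add_line_closed : seq_closed (M `&` W) -> seq_closed M.
Proof.
move=> MW_closed u x Mu ux.
have Vu k : add_line (u k) := M_line (Mu k).
have cux := coord_tends Vu (banach_seq_closed add_line_complete Vu ux) ux.
have [cx0|cx_neq0] := eqVneq (coord x) 0.
  have [u_W|/existsNP [k0 /eqP ck0]] := pselect (forall k, coord (u k) = 0).
    have MWu k : (M `&` W) (u k) by split=> //; exact: coord_eq0.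
    by case: (MW_closed u x MWu ux).
  have [N hN] := cux _ (abs_gt0 ck0).
  apply: (closed_pivot (N := N) MW_closed Mu ux (Mu k0) ck0); last by rewrite cx0 abs0 abs_ge0.
  by move=> k /hN; rewrite cx0 subr0 => /ltW.
have [N hN] := cux _ (abs_gt0 cx_neq0).
have cuN k : (N <= k)%N -> abs (coord (u k)) = abs (coord x) by move/hN/abs_eq_of_ltB.
have cN0 : coord (u N) != 0.
  by apply: contraTneq (abs_gt0 cx_neq0) => cN0; rewrite -(cuN N) // cN0 abs0 ltxx.
apply: (closed_pivot (N := N) MW_closed Mu ux (Mu N) cN0); last by rewrite cuN.
by move=> k /cuN ->; rewrite cuN.
Qed.

Lemma normalized_diff y z r : M y -> M z -> 0 < r ->
  r <= abs (coord y) -> r <= abs (coord z) ->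
  exists mu m', [/\ (M `&` W) m', abs mu <= r^-1 &
    (coord y)^-1 *: y - (coord z)^-1 *: z = mu *: m'].
Proof.
wlog le_yz : y z / abs (coord y) <= abs (coord z).
  move=> wlog_yz My Mz r_gt0 ry rz.
  have [le_yz|/ltW le_zy] := lerP (abs (coord y)) (abs (coord z)); first exact: wlog_yz.
  have [mu [m' [MWm' mu_le eq]]] := wlog_yz z y le_zy Mz My r_gt0 rz ry.
  by exists (- mu), m'; rewrite absN scaleNr -eq opprB.
move=> My Mz r_gt0 ry rz.
have cy0 : coord y != 0 by apply: contraTneq ry => ->; rewrite abs0 -ltNge.
have cz0 : coord z != 0 by apply: contraTneq rz => ->; rewrite abs0 -ltNge.
exists (coord y)^-1, (y - (coord y / coord z) *: z); split.
- exact: pivot_mem.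
- by rewrite absV lef_pV2 // posrE ?abs_gt0.
- by rewrite scalerBr scalerA mulrA mulVf // mul1r.
Qed.

Lemma unbounded_normalized_seq :
  (forall Rb, exists2 m, M m & Rb < abs (coord m)) ->
  exists g : nat -> E, [/\ forall k, add_line (g k), forall k, coord (g k) = 1,
    forall a, exists K0, forall k, (K0 <= k)%N -> M (a *: g k) &
    forall k, exists mu m', [/\ (M `&` W) m', abs mu <= abs pi ^+ k & g k - g k.+1 = mu *: m']].
Proof.
move=> unbounded.
have /choice[m hm] k : exists m, M m /\ (abs pi ^+ k)^-1 < abs (coord m).
  by have [m Mm lt_m] := unbounded (abs pi ^+ k)^-1; exists m.
have piX_gt0 k : 0 < abs pi ^+ k := exprn_gt0 k pi_gt0.
have invr_gt0_piX k : 0 < (abs pi ^+ k)^-1 by rewrite invr_gt0.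
have cm_ge k : (abs pi ^+ k)^-1 <= abs (coord (m k)) := ltW (hm k).2.
have cm0 k : coord (m k) != 0.
  by apply: contraTneq (hm k).2 => ->; rewrite abs0 -leNgt invr_ge0 ltW.
have Vm k : add_line (m k) := M_line (hm k).1.
exists (fun k => (coord (m k))^-1 *: m k); split.
- by move=> k; exact: (subspaceZ add_line_subspace _ (Vm k)).
- by move=> k; rewrite coordZ ?mulVf.
- move=> a; have [K0 hK0] := geometric_lt (abs_ge0 pi) pi_lt1 (abs a) ltr01.
  exists K0 => k leK0k; rewrite scalerA; apply: (aconvZ hM _ (hm k).1).
  rewrite absM absV ler_pdivrMr ?abs_gt0 // mul1r; apply: le_trans (cm_ge k).
  rewrite -[(_ ^+ k)^-1]mul1r ler_pdivlMr //; apply: ltW; apply: le_lt_trans hK0.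
  by rewrite ler_wpM2l ?abs_ge0 ?ler_wiXn2l ?abs_ge0 ?ltW.
- move=> k; have r_le : (abs pi ^+ k)^-1 <= abs (coord (m k.+1)).
    apply: le_trans (cm_ge k.+1); rewrite lef_pV2 ?posrE //.
    by rewrite ler_wiXn2l ?abs_ge0 ?ltW.
  have [mu [m' [MWm' mu_le ->]]] :=
    normalized_diff (hm k).1 (hm k.+1).1 (invr_gt0_piX k) (cm_ge k) r_le.
  by exists mu, m'; rewrite invrK in mu_le.
Qed.

Section Decompose.
Variables (B' : set E) (k' : nat) (t' : nat -> E).
Hypothesis B'_aconv : aconv B'.
Hypothesis B'_bc : ball_compactoid B'.
Hypothesis D'_sub : fspan k' t' `<=` M `&` W.
Hypothesis MW_sub : M `&` W `<=` msum B' (fspan k' t').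

Lemma decompose_bounded m0 Rb : M m0 -> coord m0 != 0 ->
  (forall m, M m -> abs (coord m) <= Rb) -> decomposes M.
Proof.
move=> Mm0 c0 M_bnd; have c0_gt0 := abs_gt0 c0.
have [N hN] := geometric_lt (abs_ge0 pi) pi_lt1 (Rb + 1) c0_gt0.
pose lam := (pi ^+ N)^-1.
have lam0 : lam != 0 by rewrite invr_eq0 expf_neq0 // pi_neq0.
have piN_gt0 : 0 < abs pi ^+ N := exprn_gt0 N pi_gt0.
have coord_le_lam m : M m -> abs (coord m / coord m0) <= abs lam.
  move=> Mm; rewrite absM !absV absX ler_pdivrMr // ler_pdivlMl //.
  apply: le_trans (ltW hN); rewrite mulrC ler_wpM2r ?ltW //.
  by have := M_bnd _ Mm; lra.
have lam_ge1 : abs 1 <= abs lam by have := coord_le_lam _ Mm0; rewrite mulfV.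
have key m : M m ->
    msum [set lam *: b | b in B'] (fspan k' t') (m - (coord m / coord m0) *: m0).
  move=> Mm; have [le_m|/ltW le_m0] := lerP (abs (coord m)) (abs (coord m0)).
    have [b [dd [B'b Ddd ->]]] := MW_sub (pivot_mem Mm Mm0 c0 le_m).
    by exists b, dd; split=> //; rewrite -[b]scale1r; exact: image_scale_mem.
  have cm0 : coord m != 0 by apply: contraTneq le_m0 => ->; rewrite abs0 -ltNge.
  have [b [dd [B'b Ddd eq_m0]]] := MW_sub (pivot_mem Mm0 Mm cm0 le_m0).
  have -> : m - (coord m / coord m0) *: m0 =
      - (coord m / coord m0) *: (m0 - (coord m0 / coord m) *: m).
    by rewrite scaleNr scalerBr scalerA mulrA mulfVK // divff // scale1r opprB.
  rewrite eq_m0 scalerDr; exists (- (coord m / coord m0) *: b), (- (coord m / coord m0) *: dd).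
  split=> //; last exact: (subspaceZ (fspan_subspace _ _)).
  by apply: image_scale_mem; rewrite ?absN ?coord_le_lam.
exists (msum (aco1 (lam *: m0)) [set lam *: b | b in B']); split.
- exact: aconv_msum (aconv_aco1 _) (aconv_image_scale _ B'_aconv).
- exact: ball_compactoid_msum (ball_compactoid_aco1 _) (ball_compactoid_scale _ B'_bc).
exists k', t'; split; first by move=> z /D'_sub [].
move=> m Mm; have [lb [dd [lamb Ddd eq_m]]] := key m Mm.
exists ((coord m / coord m0 / lam) *: (lam *: m0) + lb), dd; split=> //; last first.
  by rewrite -addrA -eq_m scalerA mulfVK // addrC subrK.
exists ((coord m / coord m0 / lam) *: (lam *: m0)), lb; split=> //.
exists (coord m / coord m0 / lam) => //=.
by rewrite absM absV ler_pdivrMr ?abs_gt0 // mul1r coord_le_lam.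
Qed.

(* Normalising elements of [M] with coordinates beyond |pi|^-k gives a sequence [g] with
   coordinate 1 whose steps lie in |pi|^k (B' + D'); removing the D'-parts makes it Cauchy, and
   every multiple of its limit is a limit of points of [M]. *)
Lemma line_of_unbounded : seq_closed M ->
  (forall Rb, exists2 m, M m & Rb < abs (coord m)) ->
  exists beta, [/\ add_line beta, coord beta = 1 & forall a, M (a *: beta)].
Proof.
move=> M_closed /unbounded_normalized_seq [g [Vg cg gM gdiff]].
have [rho rho_gt0 B'rho] := ball_compactoid_bounded B'_bc.
have /choice[p hp] k : exists p : E * E, [/\ fspan k' t' p.2,
    g k - g k.+1 = p.1 + p.2 & nrm p.1 <= rho * abs pi ^+ k].
  have [mu [m' [MWm' mu_le ->]]] := gdiff k.
  have [b [dd [B'b Ddd ->]]] := MW_sub MWm'.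
  exists (mu *: b, mu *: dd); split=> /=; rewrite ?scalerDr //.
    exact: (subspaceZ (fspan_subspace _ _)).
  by rewrite nrmZ mulrC; apply: ler_pM; rewrite ?nrm_ge0 ?abs_ge0 // ltW // B'rho.
pose h k := g k + \sum_(0 <= j < k) (p j).2.
have D'sum k : fspan k' t' (\sum_(0 <= j < k) (p j).2).
  by apply: (subspace_sum (fspan_subspace _ _)) => j _; case: (hp j).
have h_step k : h k.+1 - h k = - (p k).1.
  have [_ gk _] := hp k; rewrite /h big_nat_recr //=.
  have -> : g k.+1 = g k - ((p k).1 + (p k).2) by rewrite -gk opprB addrC subrK.
  by rewrite opprD addrACA subrK (addrAC (g k + _)) subrr add0r.
have h_cauchy : cauchy_seq h.
  apply: (cauchy_of_geometric (ltW rho_gt0) (abs_ge0 pi) pi_lt1) => k.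
  by rewrite h_step nrmN; case: (hp k).
have WD'sum k := (D'_sub (D'sum k)).2.
have VD'sum k : add_line (\sum_(0 <= j < k) (p j).2) := sub_add_line (WD'sum k).
have Vh k : add_line (h k) := subspaceD add_line_subspace (Vg k) (VD'sum k).
have ch k : coord (h k) = 1.
  by rewrite (coordD (Vg k) (VD'sum k)) cg (coordW (WD'sum k)) addr0.
have [beta [Vbeta hbeta]] := add_line_complete Vh h_cauchy.
exists beta; split=> //.
  apply/eqP; rewrite eq_sym -subr_eq0; apply/eqP/abs_small_eq0 => eps eps_gt0.
  have [N hN] := coord_tends Vh Vbeta hbeta eps_gt0.
  by have := hN N (leqnn N); rewrite ch.
move=> a; have [K0 hK0] := gM a.
apply: (M_closed (fun n => a *: h (n + K0)%N)); last exact/tendsZ/tends_shift.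
move=> n; rewrite scalerDr; apply: (aconvD hM (hK0 _ (leq_addl _ _))).
exact: (D'_sub (subspaceZ (fspan_subspace _ _) _ (D'sum _))).1.
Qed.

Lemma decompose_of_line beta : add_line beta -> coord beta = 1 ->
  (forall a, M (a *: beta)) -> decomposes M.
Proof.
move=> Vbeta cbeta M_line_beta.
pose t j := if (j < k')%N then t' j else beta.
have tE : fspan k' t = fspan k' t' by apply: fspan_eq => i lt_ik; rewrite /t lt_ik.
have tk' : t k' = beta by rewrite /t ltnn.
exists B'; split=> //; exists k'.+1, t; split.
  move=> _ /fspanSP [w [c [+ ->]]]; rewrite tE tk' => /D'_sub [Mw _].
  exact: (aconvD hM Mw (M_line_beta c)).
move=> m Mm; have Vm := M_line Mm.
have MWm : (M `&` W) (m - coord m *: beta).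
  split; first exact: (aconvB hM Mm (M_line_beta _)).
  have Vb : add_line (coord m *: beta) := subspaceZ add_line_subspace _ Vbeta.
  apply: coord_eq0; first exact: (subspaceB add_line_subspace Vm Vb).
  by rewrite coordB ?coordZ ?cbeta ?mulr1 ?subrr.
have [b [dd [B'b Ddd eq_m]]] := MW_sub MWm.
exists b, (dd + coord m *: beta); split=> //; last by rewrite addrA -eq_m subrK.
by apply/fspanSP; exists dd, (coord m); rewrite tE tk'.
Qed.

End Decompose.

End Pivot.

Lemma add_line_decomposes :
  (forall M, aconv M -> M `<=` W -> seq_closed M) ->
  (forall M, aconv M -> M `<=` W -> decomposes M) ->
  forall M, aconv M -> M `<=` add_line -> decomposes M.
Proof.
move=> W_closed W_dec M hM M_line.
have hMW := aconvI hM (subspace_aconv hW).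
have [B' [B'_aconv B'_bc [k' [t' [D'_sub MW_sub]]]]] := W_dec _ hMW (@subIsetr _ M W).
have [M_W|/existsNP [m0 /not_implyP [Mm0 /eqP c0]]] :=
  pselect (forall m, M m -> coord m = 0).
  exists B'; split=> //; exists k', t'; split; first by move=> z /D'_sub [].
  by move=> m Mm; apply: MW_sub; split=> //; exact: (coord_eq0 (M_line _ Mm) (M_W _ Mm)).
have [[Rb M_bnd]|unbounded] := pselect (exists Rb, forall m, M m -> abs (coord m) <= Rb).
  exact: (decompose_bounded hM M_line B'_aconv B'_bc D'_sub MW_sub Mm0 c0 M_bnd).
have M_closed := add_line_closed hM M_line (W_closed _ hMW (@subIsetr _ M W)).
have [|beta [Vbeta cbeta M_beta]] := line_of_unbounded hM M_line B'_bc D'_sub MW_sub M_closed.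
  move=> Rb; apply: contrapT => /forall2NP no_m; apply: unbounded; exists Rb => m Mm.
  by rewrite leNgt; apply/negP => lt_m; case: (no_m m) => // /(_ lt_m).
exact: (decompose_of_line hM M_line B'_aconv B'_bc D'_sub MW_sub Vbeta cbeta M_beta).
Qed.

End AddLine.

(** * Finite-dimensional spaces *)

Lemma complete_dist_gt0 (W : set E) e : banach_subset nrm W -> ~ W e ->
  exists2 d, 0 < d & forall w, W w -> d <= nrm (e - w).
Proof.
move=> hW We; apply: contrapT => no_d; apply: We; apply: (banach_approx_mem hW) => eps eps_gt0.
apply: contrapT => no_w; apply: no_d; exists eps => // w Ww.
by rewrite leNgt; apply/negP => lt_w; apply: no_w; exists w.
Qed.

Lemma fspan0E s : fspan 0 s = [set 0].
Proof.
rewrite predeqE => x; split=> [[c ->]|->]; first by rewrite big_ord0.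
by exists (fun=> 0); rewrite big_ord0.
Qed.

Lemma fspan_complete_closed_decomposes n s : [/\ banach_subset nrm (fspan n s),
  forall M, aconv M -> M `<=` fspan n s -> seq_closed M &
  forall M, aconv M -> M `<=` fspan n s -> decomposes M].
Proof.
elim: n => [|n [IHc IHcl IHd]].
  rewrite fspan0E; split.
  - move=> u u0 _; exists 0; split=> // eps eps_gt0.
    by exists 0%N => n _; rewrite u0 subrr nrm0.
  - move=> M hM M0 u x Mu ux.
    have u0 : tends_to u 0.
      by move=> eps eps_gt0; exists 0%N => n _; rewrite (M0 _ (Mu n)) subrr nrm0.
    by rewrite (tends_uniq ux u0); exact: (aconv0 hM).
  - move=> M hM M0; exists M; split=> //.
      move=> eps eps_gt0; exists 0%N, (fun=> 0) => x Mx; exists x, 0.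
      rewrite addr0 (M0 _ Mx); split=> //=; first by rewrite nrm0.
      by exists (fun=> 0); rewrite ?big_ord0 // abs0.
    exists 0%N, (fun=> 0); rewrite fspan0E; split; first by move=> _ ->; exact: (aconv0 hM).
    by move=> x Mx; exists x, 0; rewrite addr0; split.
have [s_in|s_out] := pselect (fspan n s (s n)).
  have -> : fspan n.+1 s = fspan n s; last by split.
  rewrite predeqE => x; split=> [/fspanSP [w [c [Dw ->]]]|Dx].
    exact: (subspaceD (fspan_subspace _ _) Dw (subspaceZ (fspan_subspace _ _) _ s_in)).
  by apply/fspanSP; exists x, 0; rewrite scale0r addr0.
have [d d_gt0 s_far] := complete_dist_gt0 IHc s_out.
have -> : fspan n.+1 s = add_line (fspan n s) (s n) by rewrite predeqE => x; exact: fspanSP.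
split.
- exact: add_line_complete (fspan_subspace n s) IHc d_gt0 s_far.
- move=> M hM M_line.
  apply: (add_line_closed (fspan_subspace n s) IHc d_gt0 s_far hM M_line).
  exact: IHcl (aconvI hM (subspace_aconv (fspan_subspace n s))) (@subIsetr _ M _).
- exact: add_line_decomposes (fspan_subspace n s) IHc d_gt0 s_far IHcl IHd.
Qed.

(** * The span of a local compactoid *)

Lemma scale_into_annulus y rho : y != 0 -> 0 < rho ->
  exists2 lam : K, lam != 0 & abs pi * rho <= abs lam * nrm y < rho.
Proof.
move=> y0 rho_gt0; have y_gt0 := nrm_gt0 y0.
have piX_gt0 k : 0 < abs pi ^+ k := exprn_gt0 k pi_gt0.
have [N hN] := geometric_lt (abs_ge0 pi) pi_lt1 (nrm y) rho_gt0.
have z_gt0 : 0 < nrm y * abs pi ^+ N by rewrite mulr_gt0.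
have [i0 hi0] := geometric_lt (abs_ge0 pi) pi_lt1 rho z_gt0.
have ex_i : exists i, rho * abs pi ^+ i <= nrm y * abs pi ^+ N by exists i0; exact: ltW.
case: (ex_minnP ex_i) => -[|j]; first by rewrite expr0 mulr1 => /(lt_le_trans hN); rewrite ltxx.
move=> hj min_j; have lt_j : nrm y * abs pi ^+ N < rho * abs pi ^+ j.
  by rewrite ltNge; apply/negP => /min_j; rewrite ltnn.
exists (pi ^+ N / pi ^+ j); first by rewrite mulf_neq0 ?invr_eq0 ?expf_neq0 ?pi_neq0.
rewrite absM absV !absX mulrAC [abs pi ^+ N * _]mulrC ler_pdivlMr // ltr_pdivrMr // lt_j.
by rewrite andbT -mulrA mulrCA -exprS.
Qed.

Lemma almost_orth_add (Z : set E) z t a c : linear_subspace Z -> 0 < t -> t <= 1 ->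
  (forall w, Z w -> t * nrm z <= nrm (z - w)) -> Z a ->
  t * nrm a <= nrm (a + c *: z) /\ t * (abs c * nrm z) <= nrm (a + c *: z).
Proof.
move=> hZ t_gt0 t_le1 z_orth Za.
have orth_c : t * (abs c * nrm z) <= nrm (a + c *: z).
  have [->|c0] := eqVneq c 0; first by rewrite abs0 mul0r mulr0 nrm_ge0.
  have -> : a + c *: z = c *: (z - (- c^-1) *: a).
    by rewrite scalerBr scalerA mulrN mulfV // scaleN1r opprK addrC.
  by rewrite nrmZ mulrCA ler_wpM2l ?abs_ge0 // z_orth //; exact: (subspaceZ hZ).
split=> //; have [le_a|lt_a] := lerP (nrm a) (abs c * nrm z).
  by apply: le_trans orth_c; rewrite ler_wpM2l // ltW.
apply: le_trans (_ : nrm a <= _); first by rewrite ler_piMl ?nrm_ge0.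
by rewrite addrC; apply: nrmD_ge_of_lt; rewrite nrmZ.
Qed.

Lemma riesz_lemma (F W : set E) y t rho :
  linear_subspace F -> linear_subspace W -> W `<=` F -> banach_subset nrm W ->
  F y -> ~ W y -> 0 < t -> t < 1 -> 0 < rho ->
  exists z, [/\ F z, abs pi * rho <= nrm z, nrm z < rho &
    forall w, W w -> t * nrm z <= nrm (z - w)].
Proof.
move=> hF hW WF W_complete Fy Wy t_gt0 t_lt1 rho_gt0.
have [d0 d0_gt0 y_far] := complete_dist_gt0 W_complete Wy.
pose S := [set nrm (y - w) | w in W].
have S0 : S !=set0 by exists (nrm (y - 0)), 0 => //; exact: (subspace0 hW).
have S_lb : lbound S d0 by move=> _ [w Ww <-]; exact: y_far.
have S_hlb : has_lbound S by exists d0.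
have inf_gt0 : 0 < inf S := lt_le_trans d0_gt0 (lb_le_inf S0 S_lb).
have eps_gt0 : 0 < inf S / t - inf S by rewrite subr_gt0 ltr_pdivlMr // gtr_pMr.
have [_ [w0 Ww0 <-]] := inf_adherent eps_gt0 (conj S0 S_hlb).
rewrite subrKC => y_w0; pose z0 := y - w0.
have z0_far w : W w -> inf S <= nrm (z0 - w).
  move=> Ww; rewrite /z0 -addrA -opprD; apply: (ge_inf S_hlb).
  by exists (w0 + w) => //; exact: (subspaceD hW Ww0 Ww).
have z0_neq0 : z0 != 0.
  by apply: contraTneq (z0_far 0 (subspace0 hW)) => ->; rewrite subr0 nrm0 -ltNge.
have t_z0 : t * nrm z0 < inf S by rewrite mulrC -ltr_pdivlMr.
have Fz0 : F z0 := subspaceB hF Fy (WF _ Ww0).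
clearbody z0; have [lam lam0 /andP[lam_ge lam_lt]] := scale_into_annulus z0_neq0 rho_gt0.
exists (lam *: z0); split; rewrite ?nrmZ //.
- exact: (subspaceZ hF _ Fz0).
- move=> w Ww; have -> : lam *: z0 - w = lam *: (z0 - lam^-1 *: w).
    by rewrite scalerBr (scalerKV lam0).
  rewrite nrmZ mulrCA ler_wpM2l ?abs_ge0 //; apply: le_trans (ltW t_z0) _.
  by apply: z0_far; exact: subspaceZ.
Qed.

(* The constants [tau k] decrease from 1 to 1/2, so the ratios [tau k.+1 / tau k] can be
   used as Riesz constants below 1 while their products stay above 1/2. *)
Definition tau (k : nat) : R := (1 + 2^-1 ^+ k) / 2.

Lemma tau_ge_half k : 2^-1 <= tau k.
Proof. have : (0 : R) < 2^-1 ^+ k by rewrite exprn_gt0 ?invr_gt0. by rewrite /tau; lra. Qed.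

Lemma tau_gt0 k : 0 < tau k.
Proof. by apply: lt_le_trans (tau_ge_half k); rewrite invr_gt0. Qed.

Lemma tau_le1 k : tau k <= 1.
Proof.
have : (2^-1 : R) ^+ k <= 1 by apply: exprn_ile1; rewrite ?invr_ge0 // invf_le1 ?ler1n.
by rewrite /tau; lra.
Qed.

Lemma tau_decr k : tau k.+1 < tau k.
Proof. have : (0 : R) < 2^-1 ^+ k by rewrite exprn_gt0 ?invr_gt0. by rewrite /tau exprS; lra. Qed.

Lemma fspan_finite_type k t : finite_type abs nrm (fspan k t).
Proof.
move=> p [_ pZ _ _]; exists k, (fun i : 'I_k => t i); split=> [i|x Dx].
  exact: fspan_mem.
exists x; split; first exact: fspan_lspan.
by have := pZ 0 0 (subspace0 (fspan_subspace k t)); rewrite scale0r abs0 mul0r subrr.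
Qed.

Section LocalCompactoid.
Variable A : set E.
Hypothesis hA : aconv A.

Lemma lspan_aconvP x : lspan A x <-> exists m, A (pi ^+ m *: x).
Proof.
split=> [[n [s [c [As ->]]]]|[m Ax]].
  have [m hm] := geometric_lt (abs_ge0 pi) pi_lt1 (\sum_(i < n) abs (c i)) ltr01.
  exists m; rewrite scaler_sumr; apply: (aconv_sum hA) => i _; rewrite scalerA.
  apply: (aconvZ hA _ (As i)); rewrite absM absX mulrC; apply: ltW; apply: le_lt_trans hm.
  rewrite ler_wpM2r ?exprn_ge0 ?abs_ge0 //.
  by rewrite (bigD1 i) //= lerDl sumr_ge0 // => j _; exact: abs_ge0.
exists 1%N, (fun=> pi ^+ m *: x), (fun=> (pi ^+ m)^-1); split=> //.
by rewrite big_ord1 scalerA mulVf ?scale1r // expf_neq0 // pi_neq0.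
Qed.

Lemma aconv_scale_piX m k x : A (pi ^+ m *: x) -> A (pi ^+ (m + k) *: x).
Proof.
move=> Ax; rewrite exprD mulrC -scalerA; apply: (aconvZ hA _ Ax).
by rewrite absX exprn_ile1 ?abs_ge0 ?ltW.
Qed.

Lemma lspan_aconv_subspace : linear_subspace (lspan A).
Proof.
split.
- by apply/lspan_aconvP; exists 0%N; rewrite scaler0; exact: (aconv0 hA).
- move=> x y /lspan_aconvP [m Ax] /lspan_aconvP [m' Ay]; apply/lspan_aconvP.
  exists (m + m')%N; rewrite scalerDr; apply: (aconvD hA); first exact: aconv_scale_piX.
  by rewrite addnC; exact: aconv_scale_piX.
- move=> a x /lspan_aconvP [m Ax]; apply/lspan_aconvP.
  have [j hj] := geometric_lt (abs_ge0 pi) pi_lt1 (abs a) ltr01.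
  exists (m + j)%N; rewrite scalerA exprD mulrAC -mulrA mulrC -scalerA.
  by apply: (aconvZ hA _ Ax); rewrite absM absX ltW.
Qed.

Lemma sub_lspan : A `<=` lspan A.
Proof. by move=> a Aa; apply/lspan_aconvP; exists 0%N; rewrite expr0 scale1r. Qed.

Definition dense_near_zero :=
  exists2 rho, 0 < rho & forall y, lspan A y -> nrm y < rho ->
    forall delta, 0 < delta -> exists2 a, A a & nrm (y - a) < delta.

(* One step of the Baire argument: every ball of [lspan A] contains a smaller one that avoids
   pi^-m A. *)
Lemma far_from_scaled : ~ dense_near_zero -> forall m x0 r, lspan A x0 -> 0 < r ->
  exists y dl, [/\ lspan A y, nrm (y - x0) < r, 0 < dl &
    forall z, A (pi ^+ m *: z) -> dl <= nrm (y - z)].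
Proof.
move=> not_dense m x0 r Fx0 r_gt0.
have piXm_gt0 : 0 < abs pi ^+ m := exprn_gt0 m pi_gt0.
have piXm0 : pi ^+ m != 0 by rewrite expf_neq0 // pi_neq0.
have [z0 [dl0 [Fz0 z0_lt dl0_gt0 z0_far]]] : exists z0 dl0, [/\ lspan A z0,
    nrm z0 < r * abs pi ^+ m, 0 < dl0 & forall a, A a -> dl0 <= nrm (z0 - a)].
  apply: contrapT => no_z; apply: not_dense; exists (r * abs pi ^+ m); first exact: mulr_gt0.
  move=> y Fy y_lt dl dl_gt0; apply: contrapT => no_a; apply: no_z; exists y, dl; split=> // a Aa.
  by rewrite leNgt; apply/negP => lt_a; apply: no_a; exists a.
pose z' := (pi ^+ m)^-1 *: z0; pose dl := dl0 / abs pi ^+ m.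
have z'_far z : A (pi ^+ m *: z) -> dl <= nrm (z' - z).
  have -> : z' - z = (pi ^+ m)^-1 *: (z0 - pi ^+ m *: z) by rewrite scalerBr scalerK.
  move=> /z0_far; rewrite nrmZ absV absX.
  by rewrite /dl [_^-1 * _]mulrC ler_pM2r ?invr_gt0.
have Fz' : lspan A z' := subspaceZ lspan_aconv_subspace _ Fz0.
have z'_lt : nrm z' < r by rewrite nrmZ absV absX mulrC ltr_pdivrMr.
have [[a0 [Aa0 a0_near]]|no_a0] := pselect (exists a0, A (pi ^+ m *: a0) /\ nrm (x0 - a0) < dl).
  exists (x0 + z'), dl; split.
  - exact: (subspaceD lspan_aconv_subspace Fx0 Fz').
  - by rewrite addrAC subrr add0r.
  - exact: divr_gt0.
  - move=> z Az; rewrite leNgt; apply/negP => near_z.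
    have Aza0 : A (pi ^+ m *: (z - a0)) by rewrite scalerBr; exact: (aconvB hA).
    have := z'_far _ Aza0; apply/negP; rewrite -ltNge.
    have -> : z' - (z - a0) = (x0 + z' - z) - (x0 - a0).
      by rewrite subrACA (addrC x0) addrK.
    exact: nrmB_lt.
exists x0, dl; split; rewrite ?subrr ?nrm0 ?divr_gt0 //.
by move=> z Az; rewrite leNgt; apply/negP => near_z; apply: no_a0; exists z.
Qed.

Hypothesis A_banach : banach_subset nrm (lspan A).

(* Nested balls avoiding pi^-m A for every m would shrink to a point of [lspan A] lying in no
   pi^-m A. *)
Lemma lspan_dense_near_zero : dense_near_zero.
Proof.
apply: contrapT => not_dense.
have half_ge0 : (0 : R) <= 2^-1 by rewrite invr_ge0.
have half_lt1 : (2^-1 : R) < 1 by rewrite invf_lt1 ?ltr1n.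
pose P k (xr : E * R) := [/\ lspan A xr.1, 0 < xr.2 & xr.2 <= 2^-1 ^+ k].
pose Q k (xr xr' : E * R) := [/\ nrm (xr'.1 - xr.1) < xr.2, xr'.2 <= xr.2 &
  exists2 dl, xr'.2 < dl & forall z, A (pi ^+ k *: z) -> dl <= nrm (xr'.1 - z)].
have [xr hxr] : exists xr : nat -> E * R, forall k, P k (xr k) /\ Q k (xr k) (xr k.+1).
  apply: (@dependent_choice_nat _ P Q (0, 1)).
    by split; rewrite ?expr0 //=; exact: (subspace0 lspan_aconv_subspace).
  move=> k [x r] [/= Fx r_gt0 r_le].
  have [y [dl [Fy y_near dl_gt0 y_far]]] := far_from_scaled not_dense k Fx r_gt0.
  have m_gt0 : 0 < Num.min r dl by rewrite lt_min r_gt0.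
  have m_le : Num.min r dl <= r /\ Num.min r dl <= dl by rewrite !ge_min !lexx orbT.
  exists (y, Num.min r dl / 2); split; split=> //=.
  - by rewrite divr_gt0.
  - rewrite exprS [_ / 2]mulrC; apply: (ler_wpM2l half_ge0).
    exact: le_trans m_le.1 r_le.
  - by apply: le_trans m_le.1; lra.
  - by exists dl => //; apply: lt_le_trans m_le.2; lra.
pose x k := (xr k).1; pose r k := (xr k).2.
have Fx k : lspan A (x k) by case: (hxr k) => -[].
have r_gt0 k : 0 < r k by case: (hxr k) => -[].
have r_le k : r k <= 2^-1 ^+ k by case: (hxr k) => -[].
have r_dec k : r k.+1 <= r k by case: (hxr k) => _ [].
have x_step k : nrm (x k.+1 - x k) <= r k by case: (hxr k) => _ [/ltW].
have x_cauchy : cauchy_seq x.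
  apply: (cauchy_of_geometric ler01 half_ge0 half_lt1) => k; rewrite mul1r.
  exact: le_trans (x_step k) (r_le k).
have [l [Fl xl]] := A_banach Fx x_cauchy.
have [m Aml] := (lspan_aconvP l).1 Fl.
have [_ _ [dl r_lt_dl x_far]] := (hxr m).2.
have [N hN] := xl dl (lt_trans (r_gt0 m.+1) r_lt_dl).
have tail := nrm_tail_le r_dec x_step m.+1 N.
have := x_far _ Aml; apply/negP; rewrite -ltNge -(subrKA (x (m.+1 + N)%N)).
apply: nrmD_lt; last by apply: hN; rewrite leq_addl.
by rewrite nrmB; apply: le_lt_trans tail r_lt_dl.
Qed.

Hypothesis A_loc : local_compactoid abs nrm A.

Lemma lspan_ball_near_fspan : exists2 rho, 0 < rho & forall delta, 0 < delta ->
  exists n s, forall y, lspan A y -> nrm y < rho -> exists2 v, fspan n s v & nrm (y - v) < delta.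
Proof.
have [rho rho_gt0 dense] := lspan_dense_near_zero.
exists rho => // delta delta_gt0.
have [n [s A_near]] : exists n (s : 'I_n -> E),
    A `<=` msum [set x | nrm x < delta] (lspan (range s)).
  by apply: A_loc.2; exists delta; split.
exists n, (ord_seq s) => y Fy y_lt.
have [a Aa y_a] := dense y Fy y_lt delta delta_gt0.
have [u [v [/= u_lt /lspan_range_fspan Dv a_uv]]] := A_near a Aa.
by exists v => //; rewrite -(subrKA a) {2}a_uv addrK; exact: nrmD_lt.
Qed.

Lemma tau_orthogonal_family rho : 0 < rho ->
  (forall k ys, exists2 y, lspan A y & ~ fspan k ys y) ->
  forall k, exists ys : nat -> E,
    (forall i, (i < k)%N -> [/\ lspan A (ys i), abs pi * rho <= nrm (ys i) & nrm (ys i) < rho]) /\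
    forall (c : nat -> K) j, (j < k)%N ->
      tau k * (abs (c j) * nrm (ys j)) <= nrm (\sum_(i < k) c i *: ys i).
Proof.
move=> rho_gt0 not_fin; elim=> [|k [ys [ys_ok ys_orth]]]; first by exists (fun=> 0).
have [y Fy ys_y] := not_fin k ys.
have [ys_complete _ _] := fspan_complete_closed_decomposes k ys.
have ys_F : fspan k ys `<=` lspan A.
  by apply: fspan_sub lspan_aconv_subspace _ => i /ys_ok [].
pose t := tau k.+1 / tau k.
have t_gt0 : 0 < t by rewrite divr_gt0 ?tau_gt0.
have t_lt1 : t < 1 by rewrite ltr_pdivrMr ?tau_gt0 // mul1r tau_decr.
have [z [Fz z_ge z_lt z_orth]] := riesz_lemma lspan_aconv_subspace (fspan_subspace k ys)
  ys_F ys_complete Fy ys_y t_gt0 t_lt1 rho_gt0.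
exists (fun i => if i == k then z else ys i); split.
  move=> i; rewrite ltnS leq_eqVlt => /orP[/eqP->|lt_ik]; first by rewrite eqxx.
  by rewrite ltn_eqF //; exact: ys_ok.
move=> c j lt_jk; rewrite big_ord_recr /= eqxx.
rewrite (eq_bigr (fun i : 'I_k => c i *: ys i)); last by move=> i _ /=; rewrite ltn_eqF.
have ys_a : fspan k ys (\sum_(i < k) c i *: ys i) by exists c.
have [orth_a orth_z] := almost_orth_add (c k) (fspan_subspace k ys) t_gt0 (ltW t_lt1) z_orth ys_a.
have -> : tau k.+1 = t * tau k by rewrite /t divfK ?gt_eqF ?tau_gt0.
rewrite -mulrA; have [lt_jk'|le_kj] := ltnP j k.
  rewrite ltn_eqF //; apply: le_trans orth_a.
  by apply: ler_wpM2l; [exact: ltW | exact: ys_orth].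
have -> : j = k by apply/eqP; rewrite eqn_leq le_kj -ltnS lt_jk.
rewrite eqxx; apply: le_trans orth_z; apply: ler_wpM2l; first exact: ltW.
by rewrite ler_piMl ?tau_le1 // mulr_ge0 ?abs_ge0 ?nrm_ge0.
Qed.

(* n.+1 almost orthogonal vectors, each within delta of the n-dimensional [fspan n s], admit a
   dependence relation up to errors below delta, which almost orthogonality forbids. *)
Lemma lspan_fin_dim : exists k ys, lspan A `<=` fspan k ys.
Proof.
apply: contrapT => not_fin.
have escape k ys : exists2 y, lspan A y & ~ fspan k ys y.
  apply: contrapT => none; apply: not_fin; exists k, ys => y Fy.
  by apply: contrapT => ys_y; apply: none; exists y.
have [rho rho_gt0 near] := lspan_ball_near_fspan.
pose delta := abs pi * rho / 4.
have delta_gt0 : 0 < delta by rewrite divr_gt0 ?mulr_gt0.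
have [n [s near_s]] := near delta delta_gt0.
have [ys [ys_ok ys_orth]] := tau_orthogonal_family rho_gt0 escape n.+1.
have /choice[v hv] i : exists v, (i < n.+1)%N -> fspan n s v /\ nrm (ys i - v) < delta.
  case: (ltnP i n.+1) => [/ys_ok [Fy _ y_lt]|]; last by exists 0.
  by have [v] := near_s _ Fy y_lt; exists v.
have [c [j0 lt_j0 c_j0] c_v] := kernel_nontrivial (fun i lt_i => (hv i lt_i).1).
have [j _ c_max] := @arg_maxP _ _ _ ord0 xpredT (fun i : 'I_n.+1 => abs (c i)) isT.
have cj0 : c j != 0.
  apply: contraTneq (abs_gt0 c_j0) => cj0; rewrite -leNgt.
  by have := c_max (Ordinal lt_j0) isT; rewrite cj0 abs0.
pose c' i := c i / c j.
have c'_le1 (i : 'I_n.+1) : abs (c' i) <= 1.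
  by rewrite absM absV ler_pdivrMr ?abs_gt0 // mul1r; exact: c_max.
have upper : nrm (\sum_(i < n.+1) c' i *: ys i) < delta.
  have -> : \sum_(i < n.+1) c' i *: ys i = \sum_(i < n.+1) c' i *: (ys i - v i).
    rewrite (eq_bigr (fun i : 'I_n.+1 => c' i *: (ys i - v i) + (c j)^-1 *: (c i *: v i))).
      by rewrite big_split /= -scaler_sumr c_v scaler0 addr0.
    by move=> i _; rewrite scalerA mulrC -scalerDr subrK.
  apply: nrm_sum_lt => // i _; rewrite nrmZ; apply: le_lt_trans (hv i (ltn_ord i)).2.
  by rewrite ler_piMl ?nrm_ge0.
have := ys_orth c' j (ltn_ord j); rewrite /c' divff // abs1 mul1r => lower.
have [_ ys_ge _] := ys_ok j (ltn_ord j).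
have : 2^-1 * (abs pi * rho) <= tau n.+1 * nrm (ys j).
  by apply: ler_pM; rewrite ?invr_ge0 ?mulr_ge0 ?abs_ge0 ?(ltW rho_gt0) ?tau_ge_half.
have := mulr_gt0 pi_gt0 rho_gt0; move: upper lower; rewrite /delta; lra.
Qed.

Lemma aconv_decomposition : exists B D, [/\ compactoid abs nrm B, linear_subspace D,
  finite_type abs nrm D & A = msum B D].
Proof.
have [k [ys F_ys]] := lspan_fin_dim.
have [_ _ ys_dec] := fspan_complete_closed_decomposes k ys.
have [B [hB Bc [k' [t [DA AB]]]]] := ys_dec A hA (fun a Aa => F_ys _ (sub_lspan Aa)).
exists (B `&` A), (fspan k' t); split.
- by apply: ball_compactoid_compactoid; [exact: aconvI | exact: ball_compactoid_sub Bc].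
- exact: fspan_subspace.
- exact: fspan_finite_type.
rewrite predeqE => x; split=> [Ax|[b [dd [[_ Ab] Ddd ->]]]].
  have [b [dd [Bb Ddd x_bd]]] := AB x Ax; exists b, dd; split=> //; split=> //.
  by rewrite -(addrK dd b) -x_bd; exact: (aconvB hA Ax (DA _ Ddd)).
exact: (aconvD hA Ab (DA _ Ddd)).
Qed.

End LocalCompactoid.

End NonArchimedean.

Theorem mainTheorem12 (R : realType) (K : fieldType) (abs : K -> R)
  (E : lmodType K) (nrm : E -> R) (A : set E) :
  nonarch_abs abs -> nontrivial_abs abs -> complete_abs abs ->
  nonarch_norm abs nrm ->
  local_compactoid abs nrm A ->
  banach_subset nrm (lspan A) ->
  exists (B D : set E),
    [/\ compactoid abs nrm B, linear_subspace D, finite_type abs nrm D &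
        A = msum B D].
Proof.
move=> habs [x [x0 x1]] K_complete hnorm A_loc A_banach.
have x_gt0 : 0 < abs x by rewrite lt_def x0 abs_ge0.
have [pi pi_gt0 pi_lt1] : exists2 pi, 0 < abs pi & abs pi < 1.
  have [lt_x1|gt_x1|eq_x1] := ltrgtP (abs x) 1.
  - by exists x.
  - by exists x^-1; rewrite (absV habs) ?invr_gt0 ?invf_lt1.
  - by move: x1; rewrite eq_x1 eqxx.
exact: (aconv_decomposition habs hnorm K_complete pi_gt0 pi_lt1 A_loc.1 A_banach A_loc).
Qed.
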